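(* In the model described in the context, it is impossible to implement an a-audit operation satisfying both completeness and strong accuracy.
   Context: Model. An asynchronous system has an arbitrary number of client processes (writers, readers, auditors) and $n$ storage objects $o_1,\dots,o_n$. Each $o_k$ is a linearisable loggable read/write register holding a block and a log $L_k$ (initially empty). Its operations are: rw-write($b$), which stores $b$; rw-read(), which returns the current block (or $\perp$) and appends $\langle p_r,\mathit{label}(b)\rangle$ to $L_k$, where $p_r$ is the reader and $\mathit{label}(b)$ identifies the value from which $b$ was derived; and rw-getLog(), which returns $L_k$. A multi-writer multi-reader register over values $\mathbb{V}$ is emulated by information dispersal. An a-write($v$) encodes $v$ into blocks $b_{v_1},\dots,b_{v_n}$, with $b_{v_k}$ sent to $o_k$. Any $\tau$ distinct blocks of $v$ suffice to recover $v$, and fewer do not; $\tau>f$. Reads are fast (one round-trip). Concurrency between operations is unlimited, and writes may be left incomplete. Faults. Writers and auditors can only crash. Faulty readers may crash or contact a subset of the objects. At most $f$ objects are faulty; a faulty object may crash, omit its block from readers, omit log records from auditors, and report records of nonexistent reads. Providing set $P_{p_r,v}$: the set of objects $o_k$ that, in the history, received a write request for $b_{v_k}$ and responded $b_{v_k}$ to a read request of $p_r$. The value $v$ is effectively read by $p_r$ iff $|P_{p_r,v}|\ge\tau$. Audit. An a-audit obtains logs from an auditing quorum $A$ of $n-f$ objects. It returns a set $E_A$ of evidences, each evidence $\mathcal{E}_{p_r,v}$ being created from at least $t\ge1$ records $\langle p_r,\mathit{label}(v)\rangle$ from distinct objects. Completeness: $|P_{p_r,v}|\ge\tau$ before the audit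 implies $\mathcal{E}_{p_r,v}\in E_A$. Strong accuracy: for every correct reader $p_r$ and every value $v$, $|P_{p_r,v}|<\tau$ before the audit implies $\mathcal{E}_{p_r,v}\notin E_A$. *)

(* Abstract model of executions of the audited register
   emulation, as seen at the moment an a-audit is performed. *)
From mathcomp Require Import all_boot.
Set Implicit Arguments. Unset Strict Implicit. Unset Printing Implicit Defensive.

Section Model.
Variables (n : nat) (Reader Val : eqType).

(* A log record <p_r, label(b)>: label(b) identifies the value v from which the
   block b = b_{v_k} was derived, so we identify it with v. *)
Definition record := (Reader * Val)%type.

Record execution := Execution {
  faulty_obj : {set 'I_n};
  faulty_reader : pred Reader;
  wrote : Val -> 'I_n -> bool;      (* o_k received a write request for b_{v_k} *)
  served : Reader -> Val -> 'I_n -> bool;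
                                    (* o_k responded b_{v_k} to a read of p_r *)
  obj_log : 'I_n -> seq record;
  quorum : {set 'I_n};
  reported : 'I_n -> seq record
}.

(* Admissible executions under the fault model with at most f faulty objects:
   - an object can only serve a block of v it was asked to store (blocks cannot
     be forged; faulty objects may only omit);
   - a correct object logs exactly the reads it served (rw-read appends
     <p_r,label(b)> for the block b it returns);
   - a correct object reports its log faithfully to the auditor; a faulty
     object may omit records and report records of nonexistent reads
     (its reported log is arbitrary);
   - faulty readers are unconstrained (crash / contact only some objects);
   - the auditing quorum consists of n - f objects. *)
Definition admissible (f : nat) (e : execution) : Prop :=
  [/\ #|faulty_obj e| <= f,
      (forall p v k, served e p v k -> wrote e v k),
      (forall k, k \notin faulty_obj e ->
         forall p v, ((p, v) \in obj_log e k) = served e p v k),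
      (forall k, k \notin faulty_obj e -> reported e k = obj_log e k)
    & #|quorum e| = n - f].

Definition providing (e : execution) (p : Reader) (v : Val) : {set 'I_n} :=
  [set k | wrote e v k && served e p v k].

(* An a-audit algorithm: its output E_A (a set of evidences E_{p_r,v},
   identified with pairs (p_r, v)) is computed from the logs obtained from the
   auditing quorum A. *)
Definition audit_alg := {set 'I_n} -> ('I_n -> seq record) -> Reader -> Val -> Prop.

Definition evidence_from (t : nat) (aud : audit_alg) : Prop :=
  forall A L p v, aud A L p v -> t <= #|[set k in A | (p, v) \in L k]|.

Definition audit_output (aud : audit_alg) (e : execution) :=
  aud (quorum e) (fun k => if k \in quorum e then reported e k else [::]).

Definition completeness (tau : nat) (aud : audit_alg) (e : execution) : Prop :=
  forall p v, tau <= #|providing e p v| -> audit_output aud e p v.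

Definition strong_accuracy (tau : nat) (aud : audit_alg) (e : execution) : Prop :=
  forall p v, ~~ faulty_reader e p -> #|providing e p v| < tau ->
    ~ audit_output aud e p v.

End Model.

(** The audit sees only the logs returned by the quorum, and a faulty object
    may report a read that it never served.  Let a correct reader read [v]
    from exactly [tau] objects, all of which log the read; this read is
    effective, so completeness forces the audit to report it.  Now let [f] of
    these objects be faulty and not serve the reader, yet report the same log
    records: the providing set shrinks to [tau - f < tau], so strong accuracy
    forbids the report, although the audit receives exactly the same input. *)
From mathcomp Require Import all_boot.

Set Implicit Arguments.
Unset Strict Implicit.
Unset Printing Implicit Defensive.

Lemma card_ord_lt (n m : nat) : m <= n -> #|[set k : 'I_n | k < m]| = m.
Proof.
move=> le_mn; have -> : [set k : 'I_n | k < m] = [set widen_ord le_mn i | i : 'I_m].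
  apply/setP=> k; rewrite inE; apply/idP/imsetP => [lt_km | [i _ ->]].
    by exists (Ordinal lt_km); last exact: val_inj.
  exact: (ltn_ord i).
by rewrite card_imset ?card_ord // => i j /(congr1 val) eq_ij; apply: val_inj.
Qed.

Section Indistinguishability.
Variables (n tau : nat) (Reader Val : eqType) (aud : audit_alg n Reader Val).

Lemma audit_indistinguishable (e1 e2 : execution n Reader Val) (p : Reader) (v : Val) :
  quorum e1 = quorum e2 -> reported e1 = reported e2 ->
  ~~ faulty_reader e2 p ->
  tau <= #|providing e1 p v| -> #|providing e2 p v| < tau ->
  completeness tau aud e1 -> strong_accuracy tau aud e2 -> False.
Proof.
move=> eq_quorum eq_reported ok_p eff_1 ineff_2 complete accurate.
apply: (accurate p v ok_p ineff_2).
by rewrite /audit_output -eq_quorum -eq_reported; apply: complete.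
Qed.

End Indistinguishability.

Section SingleRead.
Variables (n : nat) (Reader Val : eqType) (r0 : Reader) (v0 : Val).
Variables (logged quorum0 : {set 'I_n}).

Definition log_of (k : 'I_n) : seq (record Reader Val) :=
  if k \in logged then [:: (r0, v0)] else [::].

(* Every object stores every value, so [servers] is the providing set of the
   read; the objects of [logged] report it whether or not they served it. *)
Definition single_read_exec (faulty servers : {set 'I_n}) : execution n Reader Val :=
  Execution faulty pred0 (fun _ _ => true)
    (fun p v k => [&& p == r0, v == v0 & k \in servers]) log_of quorum0 log_of.

Lemma providing_single_read (faulty servers : {set 'I_n}) :
  providing (single_read_exec faulty servers) r0 v0 = servers.
Proof. by apply/setP=> k; rewrite inE /= !eqxx. Qed.

Lemma admissible_single_read (f : nat) (faulty servers : {set 'I_n}) :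
  #|faulty| <= f -> #|quorum0| = n - f ->
  {in ~: faulty, servers =i logged} ->
  admissible f (single_read_exec faulty servers).
Proof.
move=> card_faulty card_quorum servers_logged; split=> //= k k_ok p v.
rewrite /log_of -servers_logged ?inE //.
by case: (k \in servers); rewrite ?mem_seq1 ?xpair_eqE ?andbT ?andbF.
Qed.

End SingleRead.

Theorem theorem2 (n f tau : nat) (Reader Val : eqType) (r0 : Reader) (v0 : Val) :
  0 < f -> f < tau -> tau <= n - f ->
  ~ exists (t : nat) (aud : audit_alg n Reader Val),
      [/\ 1 <= t, evidence_from t aud &
          forall e : execution n Reader Val, admissible f e ->
            completeness tau aud e /\ strong_accuracy tau aud e].
Proof.
move=> f_gt0 lt_f_tau le_tau_nf [t [aud [_ _ audit_ok]]].
have le_tau_n : tau <= n := leq_trans le_tau_nf (leq_subr f n).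
have le_f_n : f <= n := leq_trans (ltnW lt_f_tau) le_tau_n.
pose witnesses := [set k : 'I_n | k < tau].
pose forgers := [set k : 'I_n | k < f].
pose exec := single_read_exec r0 v0 witnesses [set k : 'I_n | k < n - f].
have forgers_sub : forgers \subset witnesses.
  by apply/subsetP=> k; rewrite !inE => /ltn_trans; apply.
have adm (F S : {set 'I_n}) :
    #|F| <= f -> {in ~: F, S =i witnesses} -> admissible f (exec F S).
  move=> le_F S_witnesses; apply: admissible_single_read => //.
  by rewrite card_ord_lt ?leq_subr.
have honest_ok : admissible f (exec set0 witnesses).
  by apply: adm; rewrite ?cards0.
have forged_ok : admissible f (exec forgers (witnesses :\: forgers)).
  by apply: adm => [|k k_ok]; rewrite ?card_ord_lt // in_setD -in_setC k_ok.
have [complete _] := audit_ok _ honest_ok.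
have [_ accurate] := audit_ok _ forged_ok.
apply: (audit_indistinguishable (p := r0) (v := v0) _ _ _ _ _ complete accurate) => //.
  by rewrite providing_single_read card_ord_lt.
rewrite providing_single_read cardsDS // !card_ord_lt //.
by rewrite ltn_subrL f_gt0 (ltn_trans f_gt0 lt_f_tau).
Qed.
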